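(* Let $n > 2k+1$. Every deterministic algorithm that, on every valid instance with $n$ elements and $k$ corrupted elements, outputs a set of exactly $2k+1$ elements containing the uncorrupted maximum, must make at least $(n-(2k+1))(k+1) = nk + (n - 2k^2 - 3k - 1)$ comparison queries on some instance.
   Context: Model: there are $n$ elements $x_1,\dots,x_n$, exactly $k$ of which are corrupted (unknown to the algorithm). For every pair of distinct elements the comparison graph (a tournament) specifies which one is larger. The comparison graph restricted to the $n-k$ uncorrupted elements is acyclic; comparisons involving corrupted elements may be oriented arbitrarily. The uncorrupted maximum is the uncorrupted element larger than every other uncorrupted element. An instance is a comparison graph together with a valid set of $k$ corrupted elements. An algorithm knows $n$ and $k$, may query the orientation of any pair (a comparison query, answered according to the comparison graph), and outputs a set of elements. *)

From mathcomp Require Import all_boot.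
Set Implicit Arguments. Unset Strict Implicit. Unset Printing Implicit Defensive.

(* Elements are 'I_n.  [gt x y] = true means "x is larger than y" in the
   comparison graph. *)

Definition tournament (n : nat) (gt : rel 'I_n) : Prop :=
  (forall x, ~~ gt x x) /\
  (forall x y, x != y -> gt x y = ~~ gt y x).

Definition acyclic_on (n : nat) (gt : rel 'I_n) (U : {set 'I_n}) : Prop :=
  forall s : seq 'I_n, s != [::] -> all (fun x => x \in U) s -> ~~ cycle gt s.

Record instance (n : nat) := Instance { cmp : rel 'I_n; corrupted : {set 'I_n} }.

Definition valid_instance (n k : nat) (I : instance n) : Prop :=
  tournament (cmp I) /\ #|corrupted I| = k /\
  acyclic_on (cmp I) (~: corrupted I).

Definition uncorrupted_max (n : nat) (I : instance n) (u : 'I_n) : Prop :=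
  u \notin corrupted I /\
  forall v, v \notin corrupted I -> v != u -> cmp I u v.

(* Deterministic adaptive algorithms as (finite) decision trees: either output
   a set, or query the orientation of the pair (i, j) and continue according
   to the answer ([cmp i j] = true goes to the first subtree). *)
Inductive algo (n : nat) :=
  | Output of {set 'I_n}
  | Query of 'I_n & 'I_n & algo n & algo n.

Fixpoint run (n : nat) (A : algo n) (gt : rel 'I_n) : {set 'I_n} :=
  match A with
  | Output s => s
  | Query i j At Af => if gt i j then run At gt else run Af gt
  end.

Fixpoint nqueries (n : nat) (A : algo n) (gt : rel 'I_n) : nat :=
  match A with
  | Output _ => 0
  | Query i j At Af => (if gt i j then nqueries At gt else nqueries Af gt).+1
  end.

Definition solves (n k : nat) (A : algo n) : Prop :=
  forall I : instance n, valid_instance k I ->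
    #|run A (cmp I)| = (2 * k).+1 /\
    (forall u, uncorrupted_max I u -> u \in run A (cmp I)).

From mathcomp Require Import all_boot zify.
Set Implicit Arguments. Unset Strict Implicit. Unset Printing Implicit Defensive.

(* Adversary argument.  Run the algorithm on the order by index, with any k
   corrupted elements; it outputs a set S of 2k+1 elements.  If some x outside
   S had been compared with at most k larger elements, the adversary could
   corrupt those elements (padded to k), make x beat everybody else, and leave
   every answer the algorithm saw unchanged: x would then be the uncorrupted
   maximum, yet not output.  So each of the n - (2k+1) elements outside S was
   compared with at least k+1 larger elements, and charging every query to its
   smaller endpoint counts each query at most once. *)

Lemma acyclic_on_rank n (gt : rel 'I_n) (U : {set 'I_n}) (r : 'I_n -> nat) :
  (forall a b, a \in U -> b \in U -> gt a b -> r b < r a) -> acyclic_on gt U.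
Proof.
move=> gt_rank [|a s] // _ sU; apply/negP => /= cyc.
have sU' : all (mem U) (a :: rcons s a).
  by rewrite /= all_rcons; move: sU => /= /andP[-> ->].
have rank_path : path [rel u v | r v < r u] a (rcons s a).
  by apply: (sub_in_path _ sU') cyc => u v uU vU; exact: gt_rank.
have rank_trans : transitive [rel u v | r v < r u].
  by move=> u v w /= ruv rvw; exact: ltn_trans ruv.
have /allP/(_ a) := order_path_min rank_trans rank_path.
by rewrite mem_rcons mem_head /= ltnn => /(_ isT).
Qed.

Lemma exists_card_between (T : finType) (W D : {set T}) k :
  W \subset D -> #|W| <= k <= #|D| ->
  exists C : {set T}, [/\ W \subset C, C \subset D & #|C| = k].
Proof.
move=> WD /andP[Wk kD].
have : k - #|W| <= #|D :\: W| by rewrite cardsD (setIidPr WD) leq_sub2r.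
case/card_geqP => s [s_uniq s_size sDW].
have sW : W :&: [set x in s] = set0.
  by apply/setP => x; rewrite !inE; apply/andP => -[xW /sDW]; rewrite inE xW.
exists (W :|: [set x in s]); split; first exact: subsetUl.
  rewrite subUset WD; apply/subsetP => x; rewrite inE => /sDW.
  by rewrite inE => /andP[].
by rewrite cardsU sW cards0 subn0 cardsE (card_uniqP s_uniq) s_size subnKC.
Qed.

Fixpoint queries n (A : algo n) (gt : rel 'I_n) : seq ('I_n * 'I_n) :=
  match A with
  | Output _ => [::]
  | Query i j At Af => (i, j) :: (if gt i j then queries At gt else queries Af gt)
  end.

Lemma size_queries n (A : algo n) gt : size (queries A gt) = nqueries A gt.
Proof. by elim: A => [s|i j At IHt Af IHf] //=; case: (gt i j); rewrite ?IHt ?IHf. Qed.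

Lemma run_eq_on_queries n (A : algo n) gt gt' :
  (forall i j, (i, j) \in queries A gt -> gt' i j = gt i j) -> run A gt' = run A gt.
Proof.
elim: A => [s|i j At IHt Af IHf] //= agree.
rewrite agree ?mem_head //; case gt_ij: (gt i j).
  by apply: IHt => a b ab; apply: agree; rewrite in_cons gt_ij ab orbT.
by apply: IHf => a b ab; apply: agree; rewrite in_cons gt_ij ab orbT.
Qed.

Definition compared_above n (Q : seq ('I_n * 'I_n)) (x : 'I_n) : {set 'I_n} :=
  [set y : 'I_n | (x < y) && (((x, y) \in Q) || ((y, x) \in Q))].

Lemma sum_compared_above n (Q : seq ('I_n * 'I_n)) :
  \sum_x #|compared_above Q x| <= size Q.
Proof.
pose sort_pair (p : 'I_n * 'I_n) := if p.1 < p.2 then p else (p.2, p.1).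
under eq_bigr => x _ do rewrite -sum1dep_card.
rewrite pair_big_dep sum1dep_card -(size_map sort_pair).
apply: leq_trans (card_size _); apply: subset_leq_card.
apply/subsetP => -[x y]; rewrite inE /= => /andP[xy /orP[] Q_xy]; apply/mapP.
  by exists (x, y); rewrite // /sort_pair /= xy.
by exists (y, x); rewrite // /sort_pair /= ltnNge ltnW.
Qed.

Definition index_gt n : rel 'I_n := fun a b => b < a.

Lemma index_gt_tournament n : tournament (@index_gt n).
Proof.
split=> [x|x y]; first by rewrite /index_gt ltnn.
by rewrite /index_gt; case: ltngtP => // /val_inj ->; rewrite eqxx.
Qed.

Lemma index_gt_acyclic n (U : {set 'I_n}) : acyclic_on (@index_gt n) U.
Proof. exact: (@acyclic_on_rank _ _ _ val). Qed.

Lemma exists_valid_index_gt n k :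
  k <= n -> exists C, valid_instance k (Instance (@index_gt n) C).
Proof.
move=> kn; have := @exists_card_between _ set0 [set: 'I_n] k (sub0set _).
rewrite cards0 cardsT card_ord kn => /(_ isT) [C [_ _ Ck]].
by exists C; split; [exact: index_gt_tournament | split; last exact: index_gt_acyclic].
Qed.

Definition promote n (x : 'I_n) (W : {set 'I_n}) : rel 'I_n := fun a b =>
  if a == x then (b != x) && (b \notin W)
  else if b == x then a \in W else index_gt a b.

Section Promote.
Variables (n : nat) (x : 'I_n) (W : {set 'I_n}).

Lemma promote_tournament : tournament (promote x W).
Proof.
split=> [a|a b ab]; rewrite /promote.
  by case: eqP => //= _; rewrite /index_gt ltnn.
case: (eqVneq a x) => [ax|ax]; case: (eqVneq b x) => [bx|bx] //=.
- by move: ab; rewrite ax bx eqxx.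
- by rewrite negbK.
- by case: (index_gt_tournament n) => _ /(_ a b ab).
Qed.

Lemma promote_acyclic (C : {set 'I_n}) :
  W \subset C -> acyclic_on (promote x W) (~: C).
Proof.
move=> WC; apply: (@acyclic_on_rank _ _ _ (fun a => if a == x then n else val a)).
move=> a b; rewrite !inE /promote => aC bC.
case: (eqVneq a x) => [_ /andP[bx _]|ax]; first by rewrite (negbTE bx) ltn_ord.
case: (eqVneq b x) => [_ /(subsetP WC)|//]; by rewrite (negbTE aC).
Qed.

Lemma promote_uncorrupted_max (C : {set 'I_n}) :
  W \subset C -> x \notin C -> uncorrupted_max (Instance (promote x W) C) x.
Proof.
move=> WC xC; split=> // v vC vx; rewrite /= /promote eqxx vx /=.
by apply: contra vC => /(subsetP WC).
Qed.

Lemma promote_index_gt i j :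
  (i == x -> (j \in W) = (x < j)) -> (j == x -> (i \in W) = (x < i)) ->
  promote x W i j = index_gt i j.
Proof.
rewrite /promote /index_gt.
case: (eqVneq i x) => [-> /(_ isT) Wj _ | ix _ Wi].
  case: (eqVneq j x) => [->|jx]; rewrite ?ltnn //= Wj.
  by case: ltngtP jx => // /val_inj ->; rewrite eqxx.
by case: (eqVneq j x) => [jx|//]; rewrite jx; apply/Wi/eqP.
Qed.

End Promote.

Section LowerBound.
Variables (n k : nat) (A : algo n).
Hypotheses (solA : solves k A) (k_lt_n : k < n).

Let S := run A (@index_gt n).
Let Q := queries A (@index_gt n).

Lemma card_run_index_gt : #|S| = (2 * k).+1.
Proof.
have [C validC] := exists_valid_index_gt (ltnW k_lt_n).
exact: (solA validC).1.
Qed.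

Lemma card_compared_above_notin_run x : x \notin S -> k < #|compared_above Q x|.
Proof.
move=> xS; rewrite ltnNge; apply/negP => Wk.
set W := compared_above Q x in Wk.
have WD : W \subset [set~ x].
  by apply/subsetP => y; rewrite !inE; case: eqP => // ->; rewrite ltnn.
have [|C [WC CD Ck]] := exists_card_between (k := k) WD.
  by rewrite Wk cardsC1 card_ord; lia.
have xC : x \notin C by apply/negP => /(subsetP CD); rewrite !inE eqxx.
have validC : valid_instance k (Instance (promote x W) C).
  by split; [exact: promote_tournament | split; last exact: promote_acyclic].
have := (solA validC).2 x (promote_uncorrupted_max WC xC).
rewrite /= (@run_eq_on_queries _ A (@index_gt n)) -/S ?(negbTE xS) // => i j ij.
apply: promote_index_gt => /eqP ex; rewrite inE -/Q.
  by move: ij; rewrite ex => ->; rewrite andbT.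
by move: ij; rewrite ex => ->; rewrite orbT andbT.
Qed.

End LowerBound.

Theorem mainTheorem3 (n k : nat) (A : algo n) :
  (2 * k).+1 < n -> solves k A ->
  exists I : instance n, valid_instance k I /\
    (n - (2 * k).+1) * k.+1 <= nqueries A (cmp I).
Proof.
move=> kn solA; have k_lt_n : k < n by lia.
have [C validC] := exists_valid_index_gt (ltnW k_lt_n).
exists (Instance (@index_gt n) C); split => //=.
set S := run A (@index_gt n).
have cardCS : #|~: S| = n - (2 * k).+1.
  by have := cardsC S; rewrite card_ord (card_run_index_gt solA k_lt_n); lia.
rewrite -cardCS -sum_nat_const -size_queries; apply: leq_trans (sum_compared_above _).
rewrite [X in _ <= X](bigID (mem (~: S))) /=; apply: leq_trans (leq_addr _ _).
by apply: leq_sum => x; rewrite inE; exact: card_compared_above_notin_run.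
Qed.
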